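(* Let $X$ be a finite set and let $\tau$ be a slim collection of subsets of $X$, each of size at least 3. Then the collection $\mathcal{P}$ of all non-empty subsets $\tau'\subseteq\tau$ with ${\rm exc}'(\tau')=0$ is a patchwork: whenever $\tau_1,\tau_2\in\mathcal{P}$ and $\tau_1\cap\tau_2\neq\emptyset$, both $\tau_1\cap\tau_2$ and $\tau_1\cup\tau_2$ belong to $\mathcal{P}$.
   Context: $L(\tau)=\bigcup_{s\in\tau}s$. For a non-empty collection $\tau'$ of subsets of $X$ each of size at least 3, ${\rm exc}'(\tau')=|L(\tau')|-2-\sum_{s\in\tau'}(|s|-2)$. $\tau$ is slim if ${\rm exc}'(\tau')\ge0$ for every non-empty $\tau'\subseteq\tau$. *)

From mathcomp Require Import all_boot all_order all_algebra.
Set Implicit Arguments. Unset Strict Implicit. Unset Printing Implicit Defensive.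
Import GRing.Theory Num.Theory.
Local Open Scope ring_scope.

Definition Lset (X : finType) (tau : {set {set X}}) : {set X} :=
  \bigcup_(s in tau) s.

Definition exc' (X : finType) (tau : {set {set X}}) : int :=
  (#|Lset tau|%:Z - 2) - \sum_(s in tau) (#|s|%:Z - 2).

Definition all_big (X : finType) (tau : {set {set X}}) : Prop :=
  forall s, s \in tau -> (3 <= #|s|)%N.

Definition slim (X : finType) (tau : {set {set X}}) : Prop :=
  forall tau' : {set {set X}}, tau' \subset tau -> tau' != set0 -> 0 <= exc' tau'.

Definition Pcoll (X : finType) (tau : {set {set X}}) : {set {set {set X}}} :=
  [set tau' : {set {set X}} | (tau' \subset tau) && (tau' != set0) && (exc' tau' == 0)].

Definition patchwork (X : finType) (P : {set {set {set X}}}) : Prop :=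
  forall t1 t2, t1 \in P -> t2 \in P -> t1 :&: t2 != set0 ->
    (t1 :&: t2 \in P) /\ (t1 :|: t2 \in P).

From mathcomp Require Import all_boot all_order all_algebra.
From mathcomp Require Import zify.
Set Implicit Arguments. Unset Strict Implicit. Unset Printing Implicit Defensive.
Import GRing.Theory Num.Theory.
Local Open Scope ring_scope.

(* exc' is submodular on subcollections: L turns unions into unions and
   intersections into subsets of intersections, while the sum of the
   |s| - 2 is modular.  Hence for t1, t2 in P the excesses of t1 :|: t2 and
   t1 :&: t2 add up to at most 0; both are non-negative by slimness, so both
   vanish. *)

Lemma big_setUI (R : Type) (idx : R) (op : Monoid.com_law idx)
    (I : finType) (A B : {set I}) (F : I -> R) :
  op (\big[op/idx]_(i in A :|: B) F i) (\big[op/idx]_(i in A :&: B) F i) =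
  op (\big[op/idx]_(i in A) F i) (\big[op/idx]_(i in B) F i).
Proof.
rewrite (big_setID A (A := A :|: B)) (big_setID A (A := B)) /=.
rewrite setUK setDUl setDv set0U setIC.
by rewrite Monoid.mulmAC Monoid.mulmA.
Qed.

Section Excess.
Variable X : finType.
Implicit Types t : {set {set X}}.

Lemma Lset_setU t1 t2 : Lset (t1 :|: t2) = Lset t1 :|: Lset t2.
Proof. exact: bigcup_setU. Qed.

Lemma Lset_setI_subset t1 t2 : Lset (t1 :&: t2) \subset Lset t1 :&: Lset t2.
Proof.
apply/bigcupsP => s; rewrite inE => /andP[s1 s2].
by rewrite subsetI !(bigcup_max s).
Qed.

Lemma card_Lset_setUI t1 t2 :
  (#|Lset (t1 :|: t2)| + #|Lset (t1 :&: t2)| <= #|Lset t1| + #|Lset t2|)%N.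
Proof.
rewrite Lset_setU -(cardsUI (Lset t1)) leq_add2l.
exact/subset_leq_card/Lset_setI_subset.
Qed.

Lemma exc'_submodular t1 t2 :
  exc' (t1 :|: t2) + exc' (t1 :&: t2) <= exc' t1 + exc' t2.
Proof.
have /= := big_setUI +%R t1 t2 (fun s => #|s|%:Z - 2).
have := card_Lset_setUI t1 t2.
rewrite /exc'; set sU := \sum_(s in _ :|: _) _; set sI := \sum_(s in _ :&: _) _.
set s1 := \sum_(s in t1) _; set s2 := \sum_(s in t2) _.
lia.
Qed.

End Excess.

Theorem corollary3 (X : finType) (tau : {set {set X}}) :
  all_big tau -> slim tau -> patchwork (Pcoll tau).
Proof.
move=> _ slim_tau t1 t2.
rewrite !inE => /andP[/andP[t1_tau t1_n0] /eqP exc1] /andP[/andP[t2_tau _] /eqP exc2] tI_n0.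
have tU_tau : t1 :|: t2 \subset tau by rewrite subUset t1_tau t2_tau.
have tI_tau : t1 :&: t2 \subset tau := subset_trans (subsetIl t1 t2) t1_tau.
have tU_n0 : t1 :|: t2 != set0 by rewrite setU_eq0 negb_and t1_n0.
have := exc'_submodular t1 t2; rewrite exc1 exc2.
have := slim_tau _ tU_tau tU_n0; have := slim_tau _ tI_tau tI_n0.
rewrite tU_tau tI_tau tU_n0 tI_n0 /=.
by split; apply/eqP; lia.
Qed.
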